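(* Let $X$ be a Banach space over $\mathbb R$ and let $\sum_n x_n$ be a series in $X$ which is not unconditionally convergent. Let $\mathcal I$ be an ideal on $\mathbb N$ with the Baire property. Then the set $$A(\mathcal I):=\left\{t \in \{0,1\}^{\mathbb N} \colon \sum_n t(n)x_n \text{ is } \mathcal I\text{-convergent}\right\}$$ is meager in $\{0,1\}^{\mathbb N}$.
   Context: $\mathbb N=\{1,2,\dots\}$. An ideal on $\mathbb N$ is a family $\mathcal I\subset\mathcal P(\mathbb N)$ closed under finite unions and subsets, with $\mathbb N\notin\mathcal I$ and containing all finite subsets of $\mathbb N$. Identifying subsets of $\mathbb N$ with their characteristic functions, $\mathcal I$ is regarded as a subset of the Cantor space $\{0,1\}^{\mathbb N}$ (product topology), and ''$\mathcal I$ has the Baire property'' refers to this subset. A sequence $(y_n)$ in a normed space is $\mathcal I$-convergent to $y$ if $\{n:\|y_n-y\|>\varepsilon\}\in\mathcal I$ for every $\varepsilon>0$; a series $\sum_n y_n$ is $\mathcal I$-convergent if the sequence of its partial sums $(\sum_{i=1}^n y_i)_n$ is $\mathcal I$-convergent to some element. A series $\sum_n x_n$ is unconditionally convergent if $\sum_n x_{p(n)}$ converges for every permutation $p$ of $\mathbb N$. *)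

From HB Require Import structures.
From mathcomp Require Import all_boot all_order all_algebra.
From mathcomp Require Import all_classical all_reals all_analysis.
From mathcomp Require Import Rstruct Rstruct_topology.
Set Implicit Arguments. Unset Strict Implicit. Unset Printing Implicit Defensive.
Import Order.TTheory GRing.Theory Num.Theory.
Import numFieldNormedType.Exports.
Local Open Scope classical_set_scope.
Local Open Scope ring_scope.

(* Indexing convention: the paper's N = {1,2,...} is represented by nat = {0,1,...}
   via n |-> n.-1 (index n of the paper is index n-1 here). *)

Definition nowhere_dense (T : topologicalType) (A : set T) : Prop :=
  (closure A)^° = set0.

Definition meager (T : topologicalType) (A : set T) : Prop :=
  exists F : nat -> set T, (forall n, nowhere_dense (F n)) /\ A `<=` \bigcup_n F n.

Definition has_Baire_property (T : topologicalType) (A : set T) : Prop :=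
  exists U : set T, open U /\ meager ((A `\` U) `|` (U `\` A)).

Definition is_ideal (I : set (set nat)) : Prop :=
  [/\ (forall A B, I A -> I B -> I (A `|` B)),
      (forall A B, B `<=` A -> I A -> I B),
      ~ I setT &
      (forall A, finite_set A -> I A)].

(* the ideal viewed as a subset of the Cantor space (characteristic functions) *)
Definition ideal_in_cantor (I : set (set nat)) : set cantor_space :=
  [set t : cantor_space | I [set n | t n]].

Definition I_cvg_to (I : set (set nat)) (V : normedModType Rdefinitions.R)
  (y : nat -> V) (l : V) : Prop :=
  forall eps : Rdefinitions.R, 0 < eps -> I [set n | eps < `|y n - l|].

(* I-convergence of a series: the partial sums (sum of the first n+1 terms at
   index n, matching the 1-based convention) I-converge to some element *)
Definition I_cvg_series (I : set (set nat)) (V : normedModType Rdefinitions.R)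
  (y : nat -> V) : Prop :=
  exists l : V, I_cvg_to I (fun n => \sum_(0 <= i < n.+1) y i) l.

Definition unconditionally_convergent (V : normedModType Rdefinitions.R)
  (x : nat -> V) : Prop :=
  forall p : nat -> nat, bijective p -> cvgn (series (fun n => x (p n))).

Definition A_set (I : set (set nat)) (V : normedModType Rdefinitions.R)
  (x : nat -> V) : set cantor_space :=
  [set t : cantor_space | I_cvg_series I (fun n => (t n)%:R *: x n)].

From HB Require Import structures.
From mathcomp Require Import all_boot all_order all_algebra.
From mathcomp Require Import all_classical all_reals all_analysis.
From mathcomp Require Import Rstruct Rstruct_topology.
From mathcomp Require Import zify lra.
Set Implicit Arguments. Unset Strict Implicit. Unset Printing Implicit Defensive.
Import Order.TTheory GRing.Theory Num.Theory.
Import numFieldNormedType.Exports.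
Local Open Scope classical_set_scope.

(* Every meager subset of the
   Cantor space is avoided by the sequences that agree with a fixed x on
   infinitely many blocks [A k, A k.+1) of some partition of nat into finite
   intervals. An ideal I with the Baire property is meager: otherwise it is
   comeager in a cylinder, and the two sequences copying x on the even, resp.
   odd, blocks and equal to 1 elsewhere would both lie in I, yet their union
   is cofinite. Hence every member of I contains only finitely many blocks, so
   if t is in A(I), every late block holds an index whose partial sum is
   eps/2-close to the I-limit, and any two late blocks hold indices whose
   partial sums are eps-close. Failure of unconditional convergence yields
   eps and finite sets arbitrarily far out whose sums have norm > eps; making
   t the indicator of such a set between two late blocks destroys this
   closeness, so each of the countably many closeness conditions defines a
   nowhere dense set. *)

Definition cylinder (z : cantor_space) (L : nat) : set cantor_space :=
  [set t | forall i, (i < L)%N -> t i = z i].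

Lemma cylinder_nbhs (z : cantor_space) L : nbhs z (cylinder z L).
Proof.
elim: L => [|L IH]; first by apply: filterS filterT => t _ i.
have zL : nbhs z [set t : cantor_space | t L = z L].
  apply: (@proj_continuous nat (fun _ => bool) L z [set z L]).
  by rewrite nbhs_principalE; apply/principal_filterP.
apply: filterS (filterI IH zL) => t [tzL tL] i.
by rewrite ltnS leq_eqVlt => /predU1P[->|/tzL].
Qed.

Lemma nbhs_cylinder (z : cantor_space) W :
  nbhs z W -> exists L, cylinder z L `<=` W.
Proof.
pose F := filter_from [set: nat] (cylinder z).
have FF : Filter F.
  apply: filter_from_filter; first by exists 0%N.
  move=> i j _ _; exists (maxn i j) => // t zt.
  by split => k k_lt; apply: zt; rewrite leq_max k_lt ?orbT.
have Fz : F --> z.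
  apply/cvg_sup => i U [V] [[W'] _ <-] /= W'z VU.
  by exists i.+1 => // t zt; apply: VU => /=; rewrite zt.
by move=> /Fz[L _ LW]; exists L.
Qed.

Lemma cylinder_leq z L L' : (L <= L')%N -> cylinder z L' `<=` cylinder z L.
Proof. by move=> LL' t zt i iL; apply: zt; exact: leq_trans iL LL'. Qed.

Lemma nowhere_dense_cylinder_avoid (G : set cantor_space) : nowhere_dense G ->
  forall z L, exists y L',
    [/\ (L <= L')%N, cylinder z L y & cylinder y L' `<=` ~` closure G].
Proof.
move=> ndG z L.
have [y [zy nGy]] : exists y, cylinder z L y /\ ~ closure G y.
  apply: contrapT => zLG.
  suff : (closure G)° z by rewrite ndG.
  apply: filterS (cylinder_nbhs z L) => y zy.
  by apply: contrapT => nGy; apply: zLG; exists y.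
have /nbhs_cylinder[L0 yL0] : nbhs y (~` closure G).
  by apply: open_nbhs_nbhs; split => //; exact/closed_openC/closed_closure.
exists y, (maxn L L0); split => //; first exact: leq_maxl.
by apply: subset_trans yL0; apply: cylinder_leq; exact: leq_maxr.
Qed.

Lemma nowhere_dense_finite_avoid (T : finType) (p : T -> cantor_space)
    (N : T -> set cantor_space) : (forall a, nowhere_dense (N a)) ->
  forall A, exists B (u : cantor_space), (A <= B)%N /\
    forall a w, cylinder (p a) A w ->
      (forall i, (A <= i < B)%N -> w i = u i) -> ~ closure (N a) w.
Proof.
move=> ndN A.
suff /(_ (enum T))[B [u [AB Bu]]] :
    forall r : seq T, exists B (u : cantor_space), (A <= B)%N /\
      forall a, a \in r -> forall w, cylinder (p a) A w ->
        (forall i, (A <= i < B)%N -> w i = u i) -> ~ closure (N a) w.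
  by exists B, u; split=> // a; apply: Bu; rewrite mem_enum.
elim=> [|a r [B1 [u1 [AB1 B1u1]]]]; first by exists A, (fun=> false).
pose z : cantor_space := fun i => if (i < A)%N then p a i else u1 i.
have [y [L' [B1L' zy yL']]] := nowhere_dense_cylinder_avoid (ndN a) z B1.
exists L', y; split; first exact: leq_trans AB1 B1L'.
move=> b; rewrite inE => /predU1P[->|br] w aw wy.
  apply: yL' => i iL'; case: (ltnP i A) => iA; last by apply: wy; rewrite iA.
  by rewrite aw // zy ?(leq_trans iA AB1) // /z iA.
apply: (B1u1 b br w aw) => i /andP[Ai iB1].
by rewrite wy ?Ai ?(leq_trans iB1 B1L') // zy // /z ltnNge Ai.
Qed.

Lemma nowhere_dense_block (G : nat -> set cantor_space) :
  (forall n, nowhere_dense (G n)) ->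
  forall A k, exists B (u : cantor_space), (A < B)%N /\
    forall w j, (j <= k)%N -> (forall i, (A <= i < B)%N -> w i = u i) ->
      ~ closure (G j) w.
Proof.
move=> ndG A k.
(* one requirement for each prefix of length A (padded with false) and j <= k *)
pose p (a : {ffun 'I_A -> bool} * 'I_k.+1) : cantor_space :=
  fun i => if insub i is Some i' then a.1 i' else false.
have [B [u [AB Bu]]] :=
  nowhere_dense_finite_avoid p (fun a => ndG a.2) A.
exists B.+1, u; split => // w j jk wu.
apply: (Bu ([ffun i : 'I_A => w i], Ordinal (jk : j < k.+1)))
  => [i iA|i /andP[Ai iB]].
  by rewrite /p insubT /= ffunE.
by apply: wu; rewrite Ai ltnW.
Qed.

Section increasing_blocks.
Variable A : nat -> nat.
Hypothesis A_incr : forall k, (A k < A k.+1)%N.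

Lemma incr_leq : {homo A : i j / (i <= j)%N}.
Proof. by apply: homo_leq leqnn leq_trans _ => k; exact: ltnW. Qed.

Lemma incr_geq_id k : (k <= A k)%N.
Proof. by elim: k => // k IH; exact: leq_ltn_trans IH (A_incr k). Qed.

Lemma block_unique i k k' :
  (A k <= i < A k.+1)%N -> (A k' <= i < A k'.+1)%N -> k = k'.
Proof.
wlog kk' : k k' / (k <= k')%N.
  move=> wlog ik ik'; case: (leqP k k') => [kk'|/ltnW k'k]; first exact: wlog.
  exact/esym/wlog.
move=> /andP[_ iAk] /andP[Ak'i _]; apply/eqP; rewrite eqn_leq kk' /=.
rewrite leqNgt; apply/negP => /incr_leq Ak'.
by have := leq_trans Ak' Ak'i; rewrite leqNgt iAk.
Qed.

Lemma block_cover : A 0 = 0%N -> forall i, exists k, (A k <= i < A k.+1)%N.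
Proof.
move=> A0; elim=> [|i [k /andP[Aki iAk]]].
  by exists 0%N; have := A_incr 0; rewrite A0.
case: (ltnP i.+1 (A k.+1)) => [iAk'|Aki']; first by exists k; rewrite iAk' ltnW.
by exists k.+1; rewrite Aki' (leq_ltn_trans iAk (A_incr k.+1)).
Qed.

End increasing_blocks.

Definition agree_on_block (A : nat -> nat) (x w : cantor_space) (k : nat) :
  Prop :=
  forall i, (A k <= i < A k.+1)%N -> w i = x i.

Lemma meager_blocks (M : set cantor_space) : meager M ->
  exists (A : nat -> nat) (x : cantor_space), (forall k, A k < A k.+1)%N /\
    forall w, (forall m, exists2 k, (m <= k)%N & agree_on_block A x w k) ->
      ~ M w.
Proof.
move=> [G [ndG MG]].
have /choice[f Hf] : forall Ak : nat * nat, exists Bu : nat * cantor_space,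
    (Ak.1 < Bu.1)%N /\ forall w j, (j <= Ak.2)%N ->
      (forall i, (Ak.1 <= i < Bu.1)%N -> w i = Bu.2 i) -> ~ closure (G j) w.
  by move=> [a k]; have [B [u ?]] := nowhere_dense_block ndG a k; exists (B, u).
pose A := fix A k := if k is k'.+1 then (f (A k', k')).1 else 0%N.
have A_incr k : (A k < A k.+1)%N by exact: (Hf (A k, k)).1.
have /choice[blk blkP] := block_cover A_incr (erefl : A 0 = 0%N).
exists A, (fun i => (f (A (blk i), blk i)).2 i); split => // w wx Mw.
have [n _ Gnw] := MG w Mw; have [k nk xwk] := wx n.
apply: (Hf (A k, k)).2 nk _ (subset_closure Gnw) => i ik.
by rewrite xwk // (block_unique A_incr (blkP i) ik).
Qed.

Lemma meagerS (T : topologicalType) (A B : set T) :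
  A `<=` B -> meager B -> meager A.
Proof.
by move=> AB [F [ndF BF]]; exists F; split=> //; exact: subset_trans BF.
Qed.

Lemma ideal_meager (I : set (set nat)) : is_ideal I ->
  has_Baire_property (ideal_in_cantor I) -> meager (ideal_in_cantor I).
Proof.
move=> [IU IS IT IF] [U [oU MU]].
apply: meagerS (MU) => t It; left; split => // Ut.
have [L tLU] : exists L, cylinder t L `<=` U.
  by apply: nbhs_cylinder; exact: open_nbhs_nbhs.
have [A [x [A_incr noM]]] := meager_blocks MU.
have inI (y : cantor_space) : cylinder t L y ->
    (forall m, exists2 k, (m <= k)%N & agree_on_block A x y k) ->
    ideal_in_cantor I y.
  move=> ty yx; apply: contrapT => nIy.
  by apply: (noM y yx); right; split => //; exact: tLU.
pose P i := `[< exists2 k, odd k & (A k <= i < A k.+1)%N >].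
have P_block i k : (A k <= i < A k.+1)%N -> P i = odd k.
  move=> ik; apply/asboolP/idP => [[k' k'odd ik']|]; last by exists k.
  by rewrite (block_unique A_incr ik ik').
pose y b : cantor_space :=
  fun i => if (i < L)%N then t i else x i || (P i == b).
have yI b : ideal_in_cantor I (y b).
  apply: inI => [i iL|m]; first by rewrite /y iL.
  exists ((m + L).*2 + ~~ b)%N => [|i ik]; first lia.
  have Li : (L <= i)%N.
    case/andP: ik => Aki _; apply: leq_trans Aki.
    by apply: leq_trans (incr_geq_id A_incr _); lia.
  rewrite /y ltnNge Li (P_block _ _ ik) oddD odd_double oddb.
  by clear ik; case: b; rewrite orbF.
have Icover := IU _ _ (IU _ _ (yI false) (yI true)) (IF _ (finite_II L)).
apply/IT/(IS _ _ _ Icover) => i _; case: (ltnP i L) => iL; [right | left] => //.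
by rewrite /y /= ltnNge iL /=; case: (P i); [right | left]; rewrite orbT.
Qed.

Lemma meager_ideal_blocks (I : set (set nat)) : is_ideal I ->
  meager (ideal_in_cantor I) ->
  exists A : nat -> nat, (forall k, A k < A k.+1)%N /\
    forall C, I C -> exists m, forall k, (m <= k)%N ->
      exists2 i, (A k <= i < A k.+1)%N & ~ C i.
Proof.
move=> [_ IS _ _] /meager_blocks[A [x [A_incr noI]]].
exists A; split => // C IC; apply: contrapT => Cblocks.
apply: (noI (fun i => `[< C i >] && x i)); last first.
  by apply: IS IC => i /andP[/asboolP].
move=> m; apply: contrapT => xblocks; apply: Cblocks; exists m => k mk.
apply: contrapT => Ck; apply: xblocks; exists k => // i ik.
suff /asboolP -> : C i by [].
by apply: contrapT => nCi; apply: Ck; exists i.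
Qed.

Local Open Scope ring_scope.
Local Notation R := Rdefinitions.R.

Lemma small_tail_sums_unconditionally_convergent (X : completeNormedModType R)
    (x : nat -> X) :
  (forall e : R, 0 < e -> exists N, forall s : seq nat,
    uniq s -> all (leq N) s -> `|\sum_(i <- s) x i| <= e) ->
  unconditionally_convergent x.
Proof.
move=> small p [q pq qp]; apply/cauchy_cvgP/cauchy_seriesP => e e0.
have [N HN] := small (e / 2) (divr_gt0 e0 (ltr0n _ 2)).
pose M := (\max_(i < N) (q i).+1)%N.
have pM j : (M <= j)%N -> (N <= p j)%N.
  move=> Mj; rewrite leqNgt; apply/negP => pjN.
  have := @leq_bigmax _ (fun i : 'I_N => (q i).+1) (Ordinal pjN).
  by rewrite /= pq -/M => /leq_trans/(_ Mj); rewrite ltnn.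
exists ([set n | (M <= n)%N], [set n | (M <= n)%N]) => /=.
  by split; exists M.
case=> a b /= [Ma _]; rewrite -(big_map p xpredT x).
apply: le_lt_trans (_ : e / 2 < e); last by lra.
apply: HN; first by rewrite map_inj_uniq ?iota_uniq //; exact: can_inj pq.
apply/allP => y /mapP[j]; rewrite mem_index_iota => /andP[aj _] ->.
exact/pM/(leq_trans Ma aj).
Qed.

Lemma not_unconditionally_convergent_far_sums (X : completeNormedModType R)
    (x : nat -> X) :
  ~ unconditionally_convergent x ->
  exists2 eps : R, 0 < eps & forall N, exists s : seq nat,
    [/\ uniq s, all (leq N) s & eps < `|\sum_(i <- s) x i|].
Proof.
move=> nuc; apply: contrapT => nfar.
apply/nuc/small_tail_sums_unconditionally_convergent.
move=> e e0; apply: contrapT => nN; apply: nfar; exists e => // N.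
apply: contrapT => ns; apply: nN; exists N => s us sN.
by rewrite leNgt; apply/negP => lt; apply: ns; exists s.
Qed.

Lemma sum_indicator_scale (S : pzRingType) (V : lmodType S) (x : nat -> V)
    (t : nat -> bool) (s : seq nat) a b : uniq s ->
  {in s, forall i, (a <= i < b)%N} ->
  (forall i, (a <= i < b)%N -> t i = (i \in s)) ->
  \sum_(a <= i < b) (t i)%:R *: x i = \sum_(i <- s) x i.
Proof.
move=> us sab ts.
rewrite (eq_big_nat _ _ (F2 := fun i => if i \in s then x i else 0));
  last by move=> i /ts ->; case: (i \in s); rewrite ?scale1r ?scale0r.
rewrite -big_mkcond -big_filter; apply/perm_big/uniq_perm => //.
  exact/filter_uniq/iota_uniq.
move=> i; rewrite mem_filter mem_index_iota.
by apply/andP/idP => [[]//|si]; split => //; exact: sab.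
Qed.

Section block_partial_sums.
Variables (X : normedModType R) (x : nat -> X) (A : nat -> nat).
Hypothesis A_incr : forall k, (A k < A k.+1)%N.

Definition partial_sum (t : cantor_space) (n : nat) : X :=
  \sum_(0 <= i < n.+1) (t i)%:R *: x i.

Definition blocks_close (r : R) (m : nat) : set cantor_space :=
  [set t | forall k k', (m <= k < k')%N -> exists n n',
    [/\ (A k <= n < A k.+1)%N, (A k' <= n' < A k'.+1)%N &
        `|partial_sum t n' - partial_sum t n| <= r]].

Lemma A_set_sub_blocks_close (I : set (set nat)) (r : R) : 0 < r ->
  (forall C, I C -> exists m, forall k, (m <= k)%N ->
    exists2 i, (A k <= i < A k.+1)%N & ~ C i) ->
  A_set I x `<=` \bigcup_m blocks_close r m.
Proof.
move=> r0 IA t [l tl].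
have [m Il] := IA _ (tl (r / 2) (divr_gt0 r0 (ltr0n _ 2))).
exists m => // k k' /andP[mk kk'].
have [n nk /negP] := Il k mk; rewrite -leNgt => nl.
have [n' nk' /negP] := Il k' (leq_trans mk (ltnW kk')); rewrite -leNgt => nl'.
exists n, n'; split => //.
have := ler_distD l (partial_sum t n') (partial_sum t n).
rewrite (distrC l); lra.
Qed.

Lemma blocks_close_sum_le (r : R) m t k k' (s : seq nat) :
  blocks_close r m t -> (m <= k < k')%N -> uniq s ->
  {in s, forall i, (A k.+1 <= i < A k')%N} ->
  (forall i, (A k <= i < A k'.+1)%N -> t i = (i \in s)) ->
  `|\sum_(i <- s) x i| <= r.
Proof.
move=> Dt mkk' us sk ts.
have [n [n' [/andP[Akn nAk] /andP[Akn' n'Ak'] close]]] := Dt k k' mkk'.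
have Akk' : (A k.+1 <= A k')%N by apply: incr_leq; case/andP: mkk'.
have nn' : (n.+1 <= n'.+1)%N by lia.
suff <- : partial_sum t n' - partial_sum t n = \sum_(i <- s) x i by [].
rewrite /partial_sum (big_cat_nat (leq0n n.+1) nn') /= addrAC subrr add0r.
apply: sum_indicator_scale => // i; first by move=> /sk /andP[? ?]; lia.
by move=> /andP[? ?]; apply: ts; lia.
Qed.

Lemma blocks_close_nowhere_dense (r : R) m :
  (forall N, exists s : seq nat,
    [/\ uniq s, all (leq N) s & r < `|\sum_(i <- s) x i|]) ->
  nowhere_dense (blocks_close r m).
Proof.
move=> far; apply/seteqP; split => // z /nbhs_cylinder[L zL].
pose k := maxn m L.
have [s [us /allP sk rs]] := far (A k.+1).
pose M := (\max_(i <- s) i).+1%N.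
have sM i : i \in s -> (i < M)%N.
  by move=> si; rewrite ltnS (leq_bigmax_seq (F := id) i si).
pose k' := maxn k.+1 M.
pose t : cantor_space := fun i => if (i < L)%N then z i else i \in s.
have /(_ _ (cylinder_nbhs t (A k'.+1)))[t' [Dt' tt']] :
    closure (blocks_close r m) t.
  by apply: zL => i iL; rewrite /t iL.
have Lk : (L <= A k)%N.
  by apply: leq_trans (incr_geq_id A_incr k); exact: leq_maxr.
have Mk' : (M <= A k')%N.
  by apply: leq_trans (incr_geq_id A_incr k'); exact: leq_maxr.
suff : `|\sum_(i <- s) x i| <= r by rewrite leNgt rs.
apply: (@blocks_close_sum_le r m t' k k') => //.
- by rewrite leq_maxl /k'; lia.
- by move=> i si; rewrite (sk i si) (leq_trans (sM i si) Mk').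
- move=> i /andP[Aki iAk']; rewrite tt' // /t ifN //.
  by rewrite -leqNgt (leq_trans Lk Aki).
Qed.

End block_partial_sums.

Theorem theorem3p2 (X : completeNormedModType Rdefinitions.R) (x : nat -> X)
  (I : set (set nat)) :
  ~ unconditionally_convergent x ->
  is_ideal I ->
  has_Baire_property (ideal_in_cantor I) ->
  meager (A_set I x).
Proof.
move=> nuc Iideal IBaire.
have [eps eps0 far] := not_unconditionally_convergent_far_sums nuc.
have [A [A_incr IA]] := meager_ideal_blocks Iideal (ideal_meager Iideal IBaire).
exists (blocks_close x A eps); split.
  by move=> m; exact: blocks_close_nowhere_dense.
exact: A_set_sub_blocks_close.
Qed.
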